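(* Let $\mathcal{M}$ be an orientable, compact, boundaryless, connected Riemannian manifold with volume form $dV$, and let $\mu:\mathcal{M}\to\mathbb{R}_{>0}$ be a continuous probability density. Let $\epsilon>0$ satisfy $\epsilon<\min_{x\in\mathcal{M}}\mu(x)$ and let $\lambda\ge 1$. For a continuous function $\bar\mu:\mathcal{M}\to\mathbb{R}$ with $\int_{\mathcal{M}}\bar\mu\,dV=1$, define $\bar\mu_+(x)=\max\{\epsilon,\bar\mu(x)\}$, $\bar\mu_-(x)=\epsilon-\min\{\epsilon,\bar\mu(x)\}$, and $$\ell(\bar\mu) = -\mathbb{E}_{x\sim\mu}\log\bar\mu_+(x) + \lambda\int_{\mathcal{M}}\bar\mu_-\,dV.$$ Then, over the set of continuous functions $\bar\mu$ on $\mathcal{M}$ with $\int_{\mathcal{M}}\bar\mu\,dV=1$, the function $\bar\mu=\mu$ is a minimizer of $\ell$, and it is the unique minimizer.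
   Context: $\mathbb{E}_{x\sim\mu}f(x)=\int_{\mathcal{M}} f\mu\,dV$. Note $\bar\mu_+,\bar\mu_-\ge 0$ and $\bar\mu=\bar\mu_+-\bar\mu_-$. (In the paper $\bar\mu$ is of the form $\nu-\operatorname{div}(u)$, which automatically has integral one.) *)

From HB Require Import structures.
From mathcomp Require Import all_boot all_order all_algebra.
From mathcomp Require Import all_classical all_reals all_analysis.
Set Implicit Arguments. Unset Strict Implicit. Unset Printing Implicit Defensive.
Import Order.TTheory GRing.Theory Num.Theory numFieldNormedType.Exports.
Local Open Scope classical_set_scope.
Local Open Scope ring_scope.

Definition borelT (T : ptopologicalType) := g_sigma_algebraType (@open T).

Section defs.
Context {R : realType} {T : ptopologicalType}.

Definition mu_plus (eps : R) (mb : T -> R) (x : T) : R := Num.max eps (mb x).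
Definition mu_minus (eps : R) (mb : T -> R) (x : T) : R := eps - Num.min eps (mb x).

Definition expect (vol : {measure set (borelT T) -> \bar R}) (mu f : T -> R) : R :=
  Rintegral vol setT (fun x : borelT T => f x * mu x).

Definition ell (vol : {measure set (borelT T) -> \bar R}) (mu : T -> R)
  (eps lam : R) (mb : T -> R) : R :=
  - expect vol mu (fun x => ln (mu_plus eps mb x))
  + lam * Rintegral vol setT (fun x : borelT T => mu_minus eps mb x).
End defs.

From HB Require Import structures.
From mathcomp Require Import all_boot all_order all_algebra.
From mathcomp Require Import all_classical all_reals all_analysis.
From mathcomp Require Import ring lra.
Import Order.TTheory GRing.Theory Num.Theory numFieldNormedType.Exports.
Local Open Scope classical_set_scope.
Local Open Scope ring_scope.

(* Write  f = mb_+ = mb + mb_-  (so that  \int f = 1 + \int mb_-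
   when \int mb = 1) and, pointwise,
     gibbs_gap m f := f - m - m (ln f - ln m) = m (e^t - 1 - t),  t = ln (f/m),
   which is >= 0 and vanishes only for f = m.  Since  mu > eps, one has
   mu_+ = mu and mu_- = 0, and linearity of the integral gives
     ell mb - ell mu = \int gibbs_gap mu mb_+  +  (lam - 1) \int mb_-.
   Both terms are >= 0, so mu is a minimizer.  If ell mb <= ell mu, the
   continuous nonnegative integrand  gibbs_gap mu mb_+  has integral <= 0,
   hence vanishes identically because nonempty open sets have positive
   volume; thus max(eps, mb) = mu > eps everywhere, i.e. mb = mu. *)

(* Continuity of pointwise operations on real-valued functions, in the form
   used below (the generic library lemmas need the codomain made explicit). *)
Section RealFunctionContinuity.
Context {R : realType} {T : ptopologicalType}.
Implicit Types f g : T -> R.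

Lemma continuousB_fun {f g} : continuous f -> continuous g ->
  continuous (fun x => f x - g x).
Proof. by move=> cf cg x; exact: (@continuousB R R^o T f g x (cf x) (cg x)). Qed.

Lemma continuousM_fun {f g} : continuous f -> continuous g ->
  continuous (fun x => f x * g x).
Proof. by move=> cf cg x; exact: (@continuousM R T f g x (cf x) (cg x)). Qed.

Lemma continuous_ln_fun {f} : continuous f -> (forall x, 0 < f x) ->
  continuous (fun x => ln (f x)).
Proof. by move=> cf fpos x; exact: (continuous_comp (cf x) (continuous_ln (fpos x))). Qed.

Lemma continuous_max_fun {f g} : continuous f -> continuous g ->
  continuous (fun x => Num.max (f x) (g x)).
Proof. by move=> cf cg x; exact: (@continuous_max R T f g x (cf x) (cg x)). Qed.

Lemma continuous_min_fun {f g} : continuous f -> continuous g ->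
  continuous (fun x => Num.min (f x) (g x)).
Proof. by move=> cf cg x; exact: (@continuous_min R T f g x (cf x) (cg x)). Qed.

Lemma continuous_ln_mul {f g} : continuous f -> (forall x, 0 < f x) ->
  continuous g -> continuous (fun x => ln (f x) * g x).
Proof. by move=> cf fpos cg; apply: continuousM_fun => //; exact: continuous_ln_fun. Qed.

End RealFunctionContinuity.

Section ContinuousIntegration.
Context {R : realType} {T : ptopologicalType}.
Variable vol : {measure set (borelT T) -> \bar R}.

Local Notation integral f := (Rintegral vol [set: borelT T] f).

(* Continuous functions are Borel measurable: preimages of open intervals
   are open, and open intervals generate the Borel sets of R. *)
Lemma continuous_measurable_fun (h : T -> R) : continuous h ->
  measurable_fun [set: borelT T] (h : borelT T -> R).
Proof.
move=> ch; apply: (measurability _ (measurable_realfun.RGenOpens.measurableE R)).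
move=> _ [_ [a [b ->] <-]]; rewrite setTI.
by apply: sub_sigma_algebra; move/continuousP: ch; apply; exact: interval_open.
Qed.

Hypothesis compactT : compact [set: T].
Hypothesis vol_fin : (vol [set: borelT T] < +oo)%E.

(* On a compact space of finite volume, continuous functions are bounded and
   measurable, hence integrable. *)
Lemma continuous_integrable {h : T -> R} : continuous h ->
  vol.-integrable [set: borelT T] (EFin \o (h : borelT T -> R)).
Proof.
move=> ch; apply: measurable_bounded_integrable => //.
  exact: continuous_measurable_fun.
have [M [Mreal hM]] :=
  compact_bounded (continuous_compact (continuous_subspaceT ch) compactT).
exists M; split => // N MN x _.
exact: (hM N MN (h x) (ex_intro2 _ _ x I erefl)).
Qed.

(* A nonnegative continuous h dominates  c  times the indicator of its
   (open) superlevel set  {h > c}. *)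
Lemma integral_ge_superlevel (h : T -> R) (c : R) : continuous h ->
  (forall x, 0 <= h x) -> 0 <= c ->
  c * fine (vol (h @^-1` `]c, +oo[)) <= integral (fun x : borelT T => h x).
Proof.
move=> ch h0 c0; set U := h @^-1` `]c, +oo[.
have mU : measurable (U : set (borelT T)).
  by apply: sub_sigma_algebra; move/continuousP: ch; apply; exact: interval_open.
have indic_int : vol.-integrable [set: borelT T]
    (EFin \o (fun y : borelT T => (\1_U y : R))).
  apply: measurable_bounded_integrable => //.
    exact: measurable_realfun.measurable_indic.
  exists 1; split => // M M1 y _ /=; rewrite /indic.
  by case: (_ \in _); rewrite /= ?normr1 ?normr0 ltW // (lt_trans _ M1).
have -> : fine (vol U) = integral (fun y : borelT T => (\1_U y : R)).
  by rewrite /Rintegral integral_indic // setIT.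
rewrite -RintegralZl //.
apply: le_Rintegral => //; last 1 first.
- move=> y _; rewrite indicE; have [/set_mem|_] := boolP (y \in U).
    by rewrite mulr1 /U /= in_itv /= andbT => /ltW.
  by rewrite mulr0 h0.
- apply: (eq_integrable measurableT _ _ _ (integrableZl measurableT c indic_int)).
  by move=> y _ /=; rewrite EFinM.
- exact: continuous_integrable.
Qed.

Hypothesis vol_supp : forall U : set T, open U -> U !=set0 -> (0 < vol U)%E.

Lemma continuous_nonneg_integral_le0 {h : T -> R} : continuous h ->
  (forall x, 0 <= h x) -> integral (fun x : borelT T => h x) <= 0 ->
  forall x, h x = 0.
Proof.
move=> ch h0 hle x; apply/eqP; rewrite eq_le h0 andbT leNgt; apply/negP => hx.
set c := h x / 2; have c0 : 0 < c by rewrite divr_gt0.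
set U := h @^-1` `]c, +oo[.
have xU : U x by rewrite /U /= in_itv /= andbT /c ltr_pdivrMr // ltr_pMr // ltr1n.
have volU_pos : (0 < vol U)%E.
  by apply: vol_supp; [move/continuousP: ch; apply; exact: interval_open|exists x].
have volU_fin : (vol U < +oo)%E.
  apply: le_lt_trans vol_fin; apply: le_measure; rewrite ?inE //.
  by apply: sub_sigma_algebra; move/continuousP: ch; apply; exact: interval_open.
have := le_trans (@integral_ge_superlevel h c ch h0 (ltW c0)) hle.
by apply/negP; rewrite -ltNge mulr_gt0 // fine_gt0 // volU_pos volU_fin.
Qed.

End ContinuousIntegration.

(* The Gibbs gap  f - m - m (ln f - ln m) : the integrand of the excess loss,
   a pointwise form of the nonnegativity of relative entropy. *)
Definition gibbs_gap {R : realType} (m f : R) : R := f - m - m * (ln f - ln m).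

Section GibbsGap.
Context {R : realType}.
Context {m f : R}.
Hypotheses (m_pos : 0 < m) (f_pos : 0 < f).

(* With  t = ln f - ln m  one has  f = m e^t, so the gap is  m (e^t - 1 - t). *)
Lemma gibbs_gapE :
  gibbs_gap m f = m * (expR (ln f - ln m) - (1 + (ln f - ln m))).
Proof.
have -> : expR (ln f - ln m) = f / m by rewrite expRB !lnK ?posrE.
rewrite /gibbs_gap; field; exact: lt0r_neq0.
Qed.

Lemma gibbs_gap_ge0 : 0 <= gibbs_gap m f.
Proof.
by rewrite gibbs_gapE; apply: mulr_ge0; [exact: ltW|rewrite subr_ge0 expR_ge1Dx].
Qed.

(* Equality in  e^t >= 1 + t  forces  t = 0, i.e.  f = m. *)
Lemma gibbs_gap_eq0 : gibbs_gap m f = 0 -> f = m.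
Proof.
rewrite gibbs_gapE => /eqP; rewrite mulf_eq0 (gt_eqF m_pos) /= subr_eq0 => /eqP ht.
have [t0|t_neq0] := eqVneq (ln f - ln m) 0.
  by apply: ln_inj; rewrite ?posrE //; apply/eqP; rewrite -subr_eq0 t0.
by have := expR_gt1Dx t_neq0; rewrite ht ltxx.
Qed.

End GibbsGap.

Section Truncations.
Context {R : realType} {T : ptopologicalType} {eps : R}.
Implicit Types mb : T -> R.

Lemma mu_plus_gt0 : 0 < eps -> forall mb x, 0 < mu_plus eps mb x.
Proof. by move=> eps0 mb x; rewrite /mu_plus lt_max eps0. Qed.

Lemma mu_minus_ge0 mb x : 0 <= mu_minus eps mb x.
Proof. by rewrite /mu_minus subr_ge0 ge_min lexx. Qed.

Lemma mu_plusE mb x : mu_plus eps mb x = mb x + mu_minus eps mb x.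
Proof. rewrite /mu_plus /mu_minus; case: lerP => _; lra. Qed.

Lemma mu_plus_above {mb x} : eps <= mb x -> mu_plus eps mb x = mb x.
Proof. by move=> h; rewrite /mu_plus max_r. Qed.

Lemma mu_minus_above {mb x} : eps <= mb x -> mu_minus eps mb x = 0.
Proof. by move=> h; rewrite /mu_minus min_l ?subrr. Qed.

Lemma continuous_mu_plus {mb} : continuous mb -> continuous (mu_plus eps mb).
Proof. by move=> cmb; apply: continuous_max_fun => //; exact: cst_continuous. Qed.

Lemma continuous_mu_minus {mb} : continuous mb -> continuous (mu_minus eps mb).
Proof.
move=> cmb; rewrite /mu_minus; apply: continuousB_fun; first exact: cst_continuous.
by apply: continuous_min_fun => //; exact: cst_continuous.
Qed.

End Truncations.

Section ExcessLoss.
Context {R : realType} {T : ptopologicalType}.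
Variable vol : {measure set (borelT T) -> \bar R}.
Hypothesis compactT : compact [set: T].
Hypothesis vol_fin : (vol [set: borelT T] < +oo)%E.
Variables (mu : T -> R) (eps lam : R).
Hypotheses (mu_cont : continuous mu) (mu_int : Rintegral vol [set: borelT T] mu = 1).
Hypotheses (eps_pos : 0 < eps) (eps_lt_mu : forall x, eps < mu x).

Local Notation integral f := (Rintegral vol [set: borelT T] f).
Local Notation ell := (ell vol mu eps lam).

Let mu_pos x : 0 < mu x. Proof. exact: lt_trans eps_pos (eps_lt_mu x). Qed.

Let integrable {h} := @continuous_integrable R T vol compactT vol_fin h.

Lemma ell_at_density : ell mu = - integral (fun x => ln (mu x) * mu x).
Proof.
have above x : eps <= mu x by exact: ltW.
rewrite /ell /expect.
have -> : integral (fun x => mu_minus eps mu x) = 0.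
  rewrite (@eq_Rintegral _ _ _ _ _ (fun=> 0)) ?Rintegral_cst ?mul0r //.
  by move=> x _; exact: mu_minus_above.
rewrite mulr0 addr0; congr (- _).
by apply: eq_Rintegral => x _; rewrite mu_plus_above.
Qed.

Lemma integral_gibbs_gap (mb : T -> R) : continuous mb ->
  integral (fun x => gibbs_gap (mu x) (mu_plus eps mb x)) =
  integral (fun x => mb x) + integral (mu_minus eps mb) - integral mu
  - (integral (fun x => ln (mu_plus eps mb x) * mu x)
     - integral (fun x => ln (mu x) * mu x)).
Proof.
move=> cmb; have cplus : continuous (mu_plus eps mb) := continuous_mu_plus cmb.
have cminus : continuous (mu_minus eps mb) := continuous_mu_minus cmb.
have cln_plus := continuous_ln_mul cplus (mu_plus_gt0 eps_pos mb) mu_cont.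
have cln_mu := continuous_ln_mul mu_cont mu_pos mu_cont.
have csum : continuous (fun x => mb x + mu_minus eps mb x).
  by rewrite -(funext (mu_plusE mb)).
have -> : (fun x => gibbs_gap (mu x) (mu_plus eps mb x)) = (fun x =>
    (mb x + mu_minus eps mb x - mu x)
    - (ln (mu_plus eps mb x) * mu x - ln (mu x) * mu x)).
  by apply/funext => x; rewrite /gibbs_gap -mu_plusE; ring.
rewrite (RintegralB measurableT (integrable (continuousB_fun csum mu_cont))
  (integrable (continuousB_fun cln_plus cln_mu))).
rewrite (RintegralB measurableT (integrable csum) (integrable mu_cont)).
rewrite (RintegralB measurableT (integrable cln_plus) (integrable cln_mu)).
by rewrite (RintegralD measurableT (integrable cmb) (integrable cminus)).
Qed.

Lemma ell_excess (mb : T -> R) : continuous mb -> integral (fun x => mb x) = 1 ->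
  ell mb - ell mu =
  integral (fun x => gibbs_gap (mu x) (mu_plus eps mb x))
  + (lam - 1) * integral (mu_minus eps mb).
Proof.
move=> cmb mb_int; rewrite integral_gibbs_gap // ell_at_density mb_int mu_int.
by rewrite /ell /expect; ring.
Qed.

Lemma integral_gibbs_gap_ge0 (mb : T -> R) :
  0 <= integral (fun x => gibbs_gap (mu x) (mu_plus eps mb x)).
Proof. by apply: Rintegral_ge0 => x _; exact/gibbs_gap_ge0/mu_plus_gt0. Qed.

Lemma continuous_gibbs_gap {mb : T -> R} : continuous mb ->
  continuous (fun x => gibbs_gap (mu x) (mu_plus eps mb x)).
Proof.
move=> cmb; have cplus : continuous (mu_plus eps mb) := continuous_mu_plus cmb.
apply: continuousB_fun; first exact: continuousB_fun.
apply: continuousM_fun => //; apply: continuousB_fun.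
  exact: continuous_ln_fun (fun x => mu_plus_gt0 eps_pos mb x).
exact: continuous_ln_fun.
Qed.

Hypothesis vol_supp : forall U : set T, open U -> U !=set0 -> (0 < vol U)%E.

(* A competitor whose Gibbs gap has nonpositive integral is the density:
   the gap vanishes everywhere, so  max(eps, mb) = mu > eps. *)
Lemma vanishing_gap_density (mb : T -> R) : continuous mb ->
  integral (fun x => gibbs_gap (mu x) (mu_plus eps mb x)) <= 0 -> mb = mu.
Proof.
move=> cmb gap_le0; apply/funext => x.
have gap0 := continuous_nonneg_integral_le0 vol compactT vol_fin vol_supp
  (continuous_gibbs_gap cmb) (fun y => gibbs_gap_ge0 (mu_pos y) (mu_plus_gt0 eps_pos mb y))
  gap_le0 x.
have := gibbs_gap_eq0 (mu_pos x) (mu_plus_gt0 eps_pos mb x) gap0.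
rewrite /mu_plus; case: lerP => // _ eps_eq.
by have := eps_lt_mu x; rewrite -eps_eq ltxx.
Qed.

End ExcessLoss.

Theorem theorem2 (R : realType) (T : ptopologicalType)
  (vol : {measure set (borelT T) -> \bar R})
  (hT_hausdorff : hausdorff_space T)
  (hT_compact : compact [set: T])
  (hT_connected : connected [set: T])
  (hvol_fin : (vol [set: borelT T] < +oo)%E)
  (hvol_supp : forall U : set T, open U -> U !=set0 -> (0 < vol U)%E)
  (mu : T -> R)
  (hmu_cont : continuous mu)
  (hmu_pos : forall x, 0 < mu x)
  (hmu_int : Rintegral vol [set: borelT T] (fun x : borelT T => mu x) = 1)
  (eps lam : R)
  (heps_pos : 0 < eps)
  (heps_lt : forall x, eps < mu x)
  (hlam : 1 <= lam) :
  (forall mb : T -> R, continuous mb ->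
     Rintegral vol [set: borelT T] (fun x : borelT T => mb x) = 1 ->
     ell vol mu eps lam mu <= ell vol mu eps lam mb) /\
  (forall mb : T -> R, continuous mb ->
     Rintegral vol [set: borelT T] (fun x : borelT T => mb x) = 1 ->
     ell vol mu eps lam mb <= ell vol mu eps lam mu -> mb = mu).
Proof.
have excess := ell_excess vol hT_compact hvol_fin mu eps lam hmu_cont hmu_int
  heps_pos heps_lt.
have gap_ge0 := integral_gibbs_gap_ge0 vol mu eps heps_pos heps_lt.
have penalty_ge0 mb : 0 <= (lam - 1) * Rintegral vol [set: borelT T] (mu_minus eps mb).
  by rewrite mulr_ge0 ?subr_ge0 //; apply: Rintegral_ge0 => x _; exact: mu_minus_ge0.
split=> [mb cmb mb_int | mb cmb mb_int ell_le].
  by rewrite -subr_ge0 excess // addr_ge0.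
apply: (vanishing_gap_density vol hT_compact hvol_fin mu eps hmu_cont heps_pos
  heps_lt hvol_supp mb cmb).
by move: ell_le (excess mb cmb mb_int) (penalty_ge0 mb); lra.
Qed.
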